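(* Let $G$ be a classical graph with vertex set $[n]=\{1,\dots,n\}$, let $\mathcal{S}_G=\operatorname{span}\{|e_i\rangle\langle e_j| : i=j \text{ or } i\text{ adjacent to } j\}\subseteq M_n$ be its associated quantum graph, and let $k\in\mathbb{N}$. Then $G$ is $k$-connected if and only if $\mathcal{S}_G$ is $k$-connected.
   Context: $(|e_k\rangle)$ is the standard basis of $\mathbb{C}^n$. A quantum graph on $M_n$ is a linear subspace $\mathcal{S}\subseteq M_n$ closed under adjoints and containing $I_n$. A quantum graph $\mathcal{T}\subseteq M_N$ is connected if $\mathcal{T}^m=M_N$ for some $m\in\mathbb{N}$ (powers are spans of products); otherwise disconnected. For a projection $P\in M_n$ ($P=P^2=P^\dagger$), $(I_n-P)\mathcal{S}(I_n-P)$ is regarded as a quantum graph in $(I_n-P)M_n(I_n-P)\cong M_{n-\operatorname{rank}(P)}$. A projection $P$ is a separator of $\mathcal{S}$ if $(I_n-P)\mathcal{S}(I_n-P)$ is either disconnected (as a subspace of $M_{n-\operatorname{rank}(P)}$) or $1$-dimensional. $\mathcal{S}$ is $k$-connected if every separator of $\mathcal{S}$ has rank at least $k$. Classically, $G$ is $k$-connected if every set of vertices whose removal leaves a disconnected graph or a single vertex has at least $k$ elements. *)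

(* Complex numbers are modelled by algC (algebraic complex
   numbers, a numClosedFieldType with conjugation). *)
From HB Require Import structures.
From mathcomp Require Import all_boot all_order all_algebra all_field.
Set Implicit Arguments. Unset Strict Implicit. Unset Printing Implicit Defensive.
Import Order.TTheory GRing.Theory Num.Theory.
Local Open Scope ring_scope.

Definition simple_graph n (e : rel 'I_n) : Prop := symmetric e /\ irreflexive e.

Definition rel_minus n (e : rel 'I_n) (A : {set 'I_n}) : rel 'I_n :=
  [rel x y | [&& x \notin A, y \notin A & e x y]].

Definition cl_disconnected_after n (e : rel 'I_n) (A : {set 'I_n}) : Prop :=
  exists x y, [/\ x \notin A, y \notin A & ~~ connect (rel_minus e A) x y].

Definition cl_separator n (e : rel 'I_n) (A : {set 'I_n}) : Prop :=
  cl_disconnected_after e A \/ #|~: A| = 1%N.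

Definition cl_kconnected n (e : rel 'I_n) (k : nat) : Prop :=
  forall A : {set 'I_n}, cl_separator e A -> (k <= #|A|)%N.

Definition adjmx n (A : 'M[algC]_n) : 'M[algC]_n := (map_mx Num.conj A)^T.

Definition is_projection n (P : 'M[algC]_n) : Prop :=
  P *m P = P /\ adjmx P = P.

Definition quantum_graph n (S : {vspace 'M[algC]_n}) : Prop :=
  (forall A, A \in S -> adjmx A \in S) /\ (1%:M \in S).

(* span of all products u v with u in U, v in V (by bilinearity it suffices
   to take products of basis vectors) *)
Definition mxprodv n (U V : {vspace 'M[algC]_n}) : {vspace 'M[algC]_n} :=
  (<<[seq u *m v | u <- vbasis U, v <- vbasis V]>>)%VS.

Fixpoint mxpowv n (T : {vspace 'M[algC]_n}) (m : nat) : {vspace 'M[algC]_n} :=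
  match m with
  | 0 => T   (* unused: powers are only taken for m >= 1 *)
  | 1 => T
  | m'.+1 => mxprodv (mxpowv T m') T
  end.

Definition compress n (Q : 'M[algC]_n) (S : {vspace 'M[algC]_n})
  : {vspace 'M[algC]_n} :=
  (linfun (fun A : 'M[algC]_n => Q *m A *m Q) @: S)%VS.

(* The corner algebra Q M_n Q, identified with M_{rank Q} for a projection Q. *)
Definition corner n (Q : 'M[algC]_n) : {vspace 'M[algC]_n} := compress Q fullv.

Definition q_connected_in n (Q : 'M[algC]_n) (T : {vspace 'M[algC]_n}) : Prop :=
  exists m, (0 < m)%N /\ mxpowv T m = corner Q.

Definition q_separator n (S : {vspace 'M[algC]_n}) (P : 'M[algC]_n) : Prop :=
  is_projection P /\
  let Q := 1%:M - P in
  let T := compress Q S in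
  (~ q_connected_in Q T \/ \dim T = 1%N).

Definition q_kconnected n (S : {vspace 'M[algC]_n}) (k : nat) : Prop :=
  forall P : 'M[algC]_n, q_separator S P -> (k <= \rank P)%N.

Definition SG n (e : rel 'I_n) : {vspace 'M[algC]_n} :=
  (<<[seq delta_mx ij.1 ij.2 | ij <- enum [pred ij : 'I_n * 'I_n |
        (ij.1 == ij.2) || e ij.1 ij.2]]>>)%VS.

From HB Require Import structures.
From mathcomp Require Import all_boot all_order all_algebra all_field.
From mathcomp Require Import zify.
Set Implicit Arguments. Unset Strict Implicit. Unset Printing Implicit Defensive.
Import Order.TTheory GRing.Theory Num.Theory.
Local Open Scope ring_scope.

(* The diagonal projection onto the coordinates of a vertex set A has rank
   |A|, and compressing S_G by its complement keeps only the entries (i, j)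
   with i = j or ij an edge of G - A.  Every power of this compression thus
   vanishes at pairs lying in different components of G - A, so a classical
   separator yields a quantum one of no larger rank.

   Conversely, let P be a projection, Q = 1 - P and C = {i | Q_ii = 0}.
   Positivity of Q kills its rows and columns indexed by C, so P fixes e_c
   for c in C and |C| <= rank P.  The compressed matrix units Q E_ab Q
   multiply like matrix units up to the scalar Q_bc, so along shortest paths
   of G - C they generate the whole corner Q M_n Q.  A one-dimensional
   compression is spanned by Q (as I lies in S_G) yet contains the rank-one
   Q E_aa Q, so rank P >= n - 1, which is at least the classical
   connectivity since all but one vertex always form a separator. *)

Section MatrixUnits.
Variables (R : comPzRingType) (n : nat).
Implicit Types (M A B : 'M[R]_n) (a b c d i j : 'I_n).

Lemma delta_mx_mulmxE a b M i j : (delta_mx a b *m M) i j = (i == a)%:R * M b j.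
Proof.
rewrite mxE (bigD1 b) //= big1 => [|l /negbTE nlb]; last by rewrite mxE nlb andbF mul0r.
by rewrite mxE eqxx andbT addr0.
Qed.

Lemma mulmx_delta_mxE M c d i j : (M *m delta_mx c d) i j = M i c * (j == d)%:R.
Proof.
rewrite mxE (bigD1 c) //= big1 => [|l /negbTE nlc]; last by rewrite mxE nlc mulr0.
by rewrite mxE eqxx addr0.
Qed.

Lemma delta_mx_mulmx_delta_mx a b M c d :
  delta_mx a b *m M *m delta_mx c d = M b c *: delta_mx a d.
Proof.
apply/matrixP => i j; rewrite mulmx_delta_mxE delta_mx_mulmxE !mxE.
by case: (i == a); case: (j == d); rewrite ?mul1r ?mul0r ?mulr1 ?mulr0.
Qed.

Lemma mulmx_delta_mx_mulmxE A a b B i j :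
  (A *m delta_mx a b *m B) i j = A i a * B b j.
Proof.
rewrite -mulmxA mxE (bigD1 a) //= big1 => [|l /negbTE nla].
  by rewrite delta_mx_mulmxE eqxx mul1r addr0.
by rewrite delta_mx_mulmxE nla mul0r mulr0.
Qed.

End MatrixUnits.

Lemma mxrank_sum_le (F : fieldType) m n (I : Type) (r : seq I) (P : pred I)
    (A : I -> 'M[F]_(m, n)) :
  (\rank (\sum_(i <- r | P i) A i)%R <= \sum_(i <- r | P i) \rank (A i))%N.
Proof.
elim: r => [|x r IH]; first by rewrite !big_nil mxrank0.
rewrite !big_cons; case: (P x) => //.
by apply: leq_trans (mxrank_add _ _) _; rewrite leq_add2l.
Qed.

Lemma card_le_mxrank_unit_rows (F : fieldType) n (P : 'M[F]_n) (C : {set 'I_n}) :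
  (forall c, c \in C -> row c P = row c 1%:M) -> (#|C| <= \rank P)%N.
Proof.
move=> unitP; pose M := rowsub (@enum_val _ (mem C)) (1%:M : 'M[F]_n).
have rowsub_eq : rowsub (@enum_val _ (mem C)) P = M.
  by apply/row_matrixP => i; rewrite !row_rowsub unitP // enum_valP.
have orthoM : M *m M^T = 1%:M.
  apply/matrixP => i j; rewrite mul_rowsub_mx mul1mx !mxE.
  by rewrite (inj_eq enum_val_inj) eq_sym.
rewrite -[X in (X <= _)%N](mxrank1 F) -orthoM.
apply: leq_trans (mxrankM_maxl _ _) _.
by rewrite -rowsub_eq mxrankS // rowsub_sub.
Qed.

Section QuantumGraphPowers.
Variable n : nat.
Implicit Types (S T U V W : {vspace 'M[algC]_n}) (Q X Y : 'M[algC]_n).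

Lemma mem_mxprodv U V X Y : X \in U -> Y \in V -> X *m Y \in mxprodv U V.
Proof.
move=> XU YV; rewrite (coord_vbasis XU) (coord_vbasis YV) mulmx_suml.
apply: memv_suml => i _; rewrite -scalemxAl mulmx_sumr; apply: memvZ.
apply: memv_suml => j _; rewrite -scalemxAr; apply: memvZ.
by apply/memv_span/(allpairs_f (fun a b => a *m b)); apply: mem_nth; rewrite size_tuple.
Qed.

Lemma mxprodv_subv U V W :
  (forall X Y, X \in U -> Y \in V -> X *m Y \in W) -> (mxprodv U V <= W)%VS.
Proof.
move=> mulUV; apply/span_subvP => _ /allpairsP [[X Y] [/= XU YV ->]].
by apply: mulUV; apply: vbasis_mem.
Qed.

Lemma mem_mxpowvS T m X Y :
  X \in mxpowv T m.+1 -> Y \in T -> X *m Y \in mxpowv T m.+2.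
Proof. exact: mem_mxprodv. Qed.

Lemma memv_span_entry0 (s : seq 'M[algC]_n) i j :
  (forall Y, Y \in s -> Y i j = 0) -> forall X, X \in <<s>>%VS -> X i j = 0.
Proof.
move=> s0 X Xs; have Xt : X \in <<in_tuple s>>%VS by [].
rewrite (coord_span Xt) summxE big1 // => k _.
by rewrite mxE s0 ?mulr0 // mem_nth.
Qed.

Lemma mxpowv_support (r : rel 'I_n) T :
  transitive r -> (forall X, X \in T -> forall i j, ~~ r i j -> X i j = 0) ->
  forall m X, X \in mxpowv T m -> forall i j, ~~ r i j -> X i j = 0.
Proof.
move=> trans_r suppT; elim=> [|[|m] IHm] X; try exact: suppT.
move=> XTm i j nrij; apply: (memv_span_entry0 _ XTm) => _ /allpairsP [[Y Z] [/= YT ZT ->]].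
rewrite mxE big1 // => l _; have [ril | nril] := boolP (r i l).
  have nrlj : ~~ r l j by apply: contra nrij; apply: trans_r.
  by rewrite (suppT _ (vbasis_mem ZT) _ _ nrlj) mulr0.
by rewrite (IHm _ (vbasis_mem YT) _ _ nril) mul0r.
Qed.

Lemma compressP Q S X :
  reflect (exists2 A, A \in S & X = Q *m A *m Q) (X \in compress Q S).
Proof.
have compressE A : linfun (fun B : 'M[algC]_n => Q *m B *m Q) A = Q *m A *m Q.
  exact: (lfunE (mulmxr Q \o mulmx Q) A).
by apply: (iffP memv_imgP) => -[A AS ->]; exists A; rewrite ?compressE.
Qed.

Lemma mem_compress Q S A : A \in S -> Q *m A *m Q \in compress Q S.
Proof. by move=> AS; apply/compressP; exists A. Qed.

Lemma mxpowv_compress_subv Q S m : (mxpowv (compress Q S) m <= corner Q)%VS.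
Proof.
elim: m => [|[|m] IHm]; try exact/limgS/subvf.
apply: mxprodv_subv => X Y /(subvP IHm) /compressP [A _ ->] /compressP [B _ ->].
have -> : Q *m A *m Q *m (Q *m B *m Q) = Q *m (A *m Q *m Q *m B) *m Q.
  by rewrite !mulmxA.
exact/mem_compress/memvf.
Qed.

End QuantumGraphPowers.

Lemma cl_kconnected_le_pred n (e : rel 'I_n) k :
  cl_kconnected e k -> (0 < n)%N -> (k <= n.-1)%N.
Proof.
move=> clk n_gt0; have := clk [set~ Ordinal n_gt0]; rewrite cardsC1 card_ord; apply.
by right; rewrite setCK cards1.
Qed.

Section CoordinateProjections.
Variable n : nat.
Implicit Types (A : {set 'I_n}) (Y : 'M[algC]_n).

Definition coord_proj A : 'M[algC]_n := diag_mx (\row_i (i \in A)%:R).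

Lemma coord_projE A i j : coord_proj A i j = ((i == j) && (i \in A))%:R.
Proof. by rewrite !mxE; case: (i == j); case: (i \in A). Qed.

Lemma coord_proj_is_projection A : is_projection (coord_proj A).
Proof.
split; apply/matrixP => i j.
  by rewrite mul_diag_mx !mxE; case: (i == j); case: (i \in A); rewrite ?mul1r ?mul0r.
rewrite /adjmx !mxE rmorphMn rmorph_nat eq_sym.
by have [-> | ] := eqVneq i j.
Qed.

Lemma coord_proj_sum A : coord_proj A = \sum_(a in A) delta_mx a a.
Proof.
rewrite /coord_proj diag_mx_sum_delta [RHS]big_mkcond; apply: eq_bigr => i _.
by rewrite mxE; case: (i \in A); rewrite ?scale1r ?scale0r.
Qed.

Lemma mxrank_coord_proj A : (\rank (coord_proj A) <= #|A|)%N.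
Proof.
rewrite coord_proj_sum; apply: leq_trans (mxrank_sum_le _ _ _) _.
by under eq_bigr do rewrite mxrank_delta; rewrite sum1_card.
Qed.

Lemma one_sub_coord_proj A : 1%:M - coord_proj A = coord_proj (~: A).
Proof.
apply/matrixP => i j; rewrite !(coord_projE, mxE) inE.
by case: (i == j); case: (i \in A); rewrite ?subr0 ?subrr.
Qed.

Lemma coord_proj_conjE A Y i j :
  (coord_proj A *m Y *m coord_proj A) i j = (i \in A)%:R * Y i j * (j \in A)%:R.
Proof. by rewrite mul_diag_mx mul_mx_diag !mxE. Qed.

End CoordinateProjections.

Section GraphSpace.
Variables (n : nat) (e : rel 'I_n).

Lemma SG_entry0 Y i j : Y \in SG e -> ~~ ((i == j) || e i j) -> Y i j = 0.
Proof.
move=> YS nij; apply: (memv_span_entry0 _ YS) => Z /mapP [[a b]].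
rewrite mem_enum inE /= => ab ->; rewrite mxE.
by apply/eqP; rewrite pnatr_eq0 eqb0; apply: contra nij => /andP [/eqP -> /eqP ->].
Qed.

Lemma delta_mx_SG a b : (a == b) || e a b -> delta_mx a b \in SG e.
Proof. by move=> ab; apply/memv_span/mapP; exists (a, b); rewrite ?mem_enum. Qed.

Lemma scalar_mx_SG c : c%:M \in SG e.
Proof.
rewrite scalar_mx_sum_delta; apply: memv_suml => i _.
by apply/memvZ/delta_mx_SG; rewrite eqxx.
Qed.

End GraphSpace.

Section SeparatorFromVertexCut.
Variables (n : nat) (e : rel 'I_n) (A : {set 'I_n}).

Let Q : 'M[algC]_n := coord_proj (~: A).
Let T := compress Q (SG e).

Lemma compress_SG_support X :
  X \in T -> forall i j, ~~ connect (rel_minus e A) i j -> X i j = 0.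
Proof.
move=> /compressP [Y YS ->] i j nij; rewrite coord_proj_conjE !inE.
have [iA | iA] := boolP (i \in A); first by rewrite !mul0r.
have [jA | jA] := boolP (j \in A); first by rewrite mulr0.
rewrite (SG_entry0 YS) ?mulr0 ?mul0r //; apply: contra nij => /orP [/eqP <- | eij].
  exact: connect0.
by apply/connect1/and3P.
Qed.

Lemma disconnected_compress_SG : cl_disconnected_after e A -> ~ q_connected_in Q T.
Proof.
move=> [x [y [xA yA nxy]]] [m [_ Tm]].
have Exy : Q *m delta_mx x y *m Q \in mxpowv T m by rewrite Tm mem_compress ?memvf.
have := mxpowv_support (@connect_trans _ _) compress_SG_support Exy nxy.
by rewrite coord_proj_conjE !inE xA yA mxE !eqxx mulr1 mul1r => /eqP; rewrite oner_eq0.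
Qed.

Lemma compress_SG_vline x : ~: A = [set x] -> T = <[delta_mx x x]>%VS.
Proof.
rewrite /T /Q => ->; apply/eqP; rewrite eqEsubv; apply/andP; split.
  apply/subvP => _ /compressP [Y _ ->]; apply/vlineP; exists (Y x x).
  apply/matrixP => i j; rewrite coord_proj_conjE !mxE !inE.
  have [-> | ] := eqVneq i x; have [-> | ] := eqVneq j x;
    by rewrite ?mul1r ?mulr1 ?mul0r ?mulr0.
have -> : delta_mx x x = coord_proj [set x] *m delta_mx x x *m coord_proj [set x].
  apply/matrixP => i j; rewrite coord_proj_conjE !mxE !inE.
  by case: (i == x); case: (j == x); rewrite ?mul1r ?mulr1 ?mul0r ?mulr0.
by rewrite -memvE mem_compress // delta_mx_SG ?eqxx.
Qed.

Lemma coord_proj_q_separator : cl_separator e A -> q_separator (SG e) (coord_proj A).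
Proof.
move=> sepA; split; first exact: coord_proj_is_projection.
rewrite /= one_sub_coord_proj; case: sepA => [disc | /eqP /cards1P [x Ax]].
  by left; apply: disconnected_compress_SG.
right; rewrite [compress _ _](compress_SG_vline Ax) dim_vline.
suff -> : delta_mx x x != 0 :> 'M[algC]_n by [].
by apply/eqP => /matrixP /(_ x x); rewrite !mxE eqxx => /eqP; rewrite oner_eq0.
Qed.

End SeparatorFromVertexCut.

Lemma q_to_cl_kconnected n (e : rel 'I_n) k :
  q_kconnected (SG e) k -> cl_kconnected e k.
Proof.
move=> qk A sepA; apply: leq_trans (mxrank_coord_proj A).
exact/qk/coord_proj_q_separator.
Qed.

Section SeparatorToVertexCut.
Variables (n : nat) (e : rel 'I_n) (P : 'M[algC]_n).
Hypothesis projP : is_projection P.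

Let Q := 1%:M - P.
Let T := compress Q (SG e).
Let C := [set i | Q i i == 0].

Lemma one_sub_proj_idem : Q *m Q = Q.
Proof.
case: projP => PP _.
by rewrite mulmxBl mul1mx mulmxBr mulmx1 PP subrr subr0.
Qed.

Lemma one_sub_proj_adjE i j : Q i j = (Q j i)^*.
Proof.
case: projP => _ /matrixP /(_ i j); rewrite /adjmx !mxE => Pij.
by rewrite rmorphB /= rmorphMn rmorph1 Pij eq_sym.
Qed.

Lemma one_sub_proj_diag0 a : Q a a = 0 -> forall k, Q a k = 0 /\ Q k a = 0.
Proof.
move=> Qaa.
have rowa0 : \sum_k Q a k * (Q a k)^* = 0.
  (* Q = Q Q and Q is self-adjoint, so Q a a is the squared norm of row a. *)
  have Qaa_sum : Q a a = \sum_k Q a k * Q k a by rewrite -{1}one_sub_proj_idem mxE.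
  rewrite -[RHS]Qaa Qaa_sum.
  by apply: eq_bigr => k _; rewrite -one_sub_proj_adjE.
have Qak k : Q a k = 0.
  apply/eqP; rewrite -mul_conjC_eq0; apply/eqP.
  exact: (psumr_eq0P (fun i _ => mul_conjC_ge0 _) rowa0).
by move=> k; split; rewrite ?Qak // one_sub_proj_adjE Qak conjC0.
Qed.

Lemma card_diag0_le_rank : (#|C| <= \rank P)%N.
Proof.
apply: card_le_mxrank_unit_rows => c; rewrite inE => /eqP /one_sub_proj_diag0 Qc.
apply/rowP => j; have [Qcj _] := Qc j.
by move/eqP: Qcj; rewrite !mxE subr_eq0 => /eqP.
Qed.

Let cunit a b := Q *m delta_mx a b *m Q.

Lemma cunit_mul a b c d : cunit a b *m cunit c d = Q b c *: cunit a d.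
Proof.
rewrite /cunit -!mulmxA (mulmxA Q Q) one_sub_proj_idem (mulmxA (delta_mx a b)).
by rewrite (mulmxA _ (delta_mx c d)) delta_mx_mulmx_delta_mx -scalemxAl -scalemxAr.
Qed.

Lemma cunit_mem a b : (a == b) || e a b -> cunit a b \in T.
Proof. by move=> ab; apply/mem_compress/delta_mx_SG. Qed.

Lemma cunit_diag0 a b : (Q a a == 0) || (Q b b == 0) -> cunit a b = 0.
Proof.
move=> ab0; apply/matrixP => i j; rewrite mulmx_delta_mx_mulmxE [RHS]mxE.
case/orP: ab0 => /eqP/one_sub_proj_diag0 Q0.
  by rewrite (Q0 i).2 mul0r.
by rewrite (Q0 j).1 mulr0.
Qed.

Lemma cunit_step m a b c :
  cunit a b \in mxpowv T m.+1 -> Q b b != 0 -> (b == c) || e b c ->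
  cunit a c \in mxpowv T m.+2.
Proof.
move=> abTm bb bc; have := mem_mxpowvS abTm (cunit_mem bc).
by rewrite cunit_mul => /(memvZ (Q b b)^-1); rewrite scalerA mulVf ?scale1r.
Qed.

Lemma cunit_mxpowv_pad m m' a b :
  Q b b != 0 -> cunit a b \in mxpowv T m.+1 -> (m <= m')%N -> cunit a b \in mxpowv T m'.+1.
Proof.
move=> bb abTm; elim: m' => [|m' IHm'].
  by rewrite leqn0 => /eqP m0; move: abTm; rewrite m0.
rewrite leq_eqVlt ltnS => /predU1P [<- // | le_mm'].
by apply: cunit_step (IHm' le_mm') bb _; rewrite eqxx.
Qed.

Lemma cunit_path a p :
  path (rel_minus e C) a p -> cunit a (last a p) \in mxpowv T (size p).+1.
Proof.
elim/last_ind: p => [|p c IHp]; first by move=> _; rewrite cunit_mem ?eqxx.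
rewrite rcons_path last_rcons size_rcons => /andP [pth /and3P [bC _ bc]].
by apply: cunit_step (IHp pth) _ _; rewrite ?bc ?orbT //; move: bC; rewrite inE.
Qed.

Lemma mxpowv_compress_SG_corner :
  (forall x y, x \notin C -> y \notin C -> connect (rel_minus e C) x y) ->
  mxpowv T n.+1 = corner Q.
Proof.
move=> connC; apply/eqP; rewrite eqEsubv mxpowv_compress_subv andTb.
apply/subvP => _ /compressP [Y _ ->]; rewrite [Y]matrix_sum_delta.
rewrite mulmx_sumr mulmx_suml; apply: memv_suml => a _.
rewrite mulmx_sumr mulmx_suml; apply: memv_suml => b _.
rewrite -scalemxAr -scalemxAl; apply: memvZ; rewrite -/(cunit a b).
have [ab0 | ] := boolP ((Q a a == 0) || (Q b b == 0)); first by rewrite cunit_diag0 ?mem0v.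
rewrite negb_or => /andP [aa bb].
have /connectP [p pth b_last] : connect (rel_minus e C) a b by apply: connC; rewrite inE.
move: bb; rewrite b_last; case: (shortenP pth) => p' pth' uniq_p' _ bb.
have size_p' : (size (a :: p') <= n)%N.
  by rewrite -(card_uniqP uniq_p') -[X in (_ <= X)%N]card_ord max_card.
exact: cunit_mxpowv_pad bb (cunit_path pth') (ltnW size_p').
Qed.

Lemma compress_SG_dim1_rank : \dim T = 1%N -> (\rank Q <= 1)%N.
Proof.
move=> dimT; have [-> | Qn0] := eqVneq Q 0; first by rewrite mxrank0.
have QT : Q \in T.
  by have := mem_compress Q (scalar_mx_SG e 1); rewrite mulmx1 one_sub_proj_idem.
have T_Q : T = <[Q]>%VS.
  by apply/eqP; rewrite eq_sym eqEdim -memvE QT dim_vline Qn0 dimT.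
have [a aa] : exists a, Q a a != 0.
  apply/existsP; apply: contraR Qn0 => /existsPn Qdiag0; apply/eqP/matrixP => i j.
  by have /negPn/eqP/one_sub_proj_diag0/(_ j) [-> _] := Qdiag0 i; rewrite mxE.
have /vlineP [c cunit_c] : cunit a a \in <[Q]>%VS by rewrite -T_Q cunit_mem ?eqxx.
have cunit_nz : cunit a a != 0.
  apply/eqP => /matrixP /(_ a a); rewrite mulmx_delta_mx_mulmxE [RHS]mxE.
  by move/eqP; rewrite mulf_eq0 orbb (negbTE aa).
have c_nz : c != 0 by apply/eqP => c0; move: cunit_nz; rewrite cunit_c c0 scale0r eqxx.
rewrite -(mxrank_scale_nz Q c_nz) -cunit_c; apply: leq_trans (mxrankM_maxl _ _) _.
by apply: leq_trans (mxrankM_maxr _ _) _; rewrite mxrank_delta.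
Qed.

Lemma cl_kconnected_rank_proj k :
  cl_kconnected e k -> q_separator (SG e) P -> (k <= \rank P)%N.
Proof.
move=> clk [_ sepP]; rewrite leqNgt; apply/negP => rankP_lt.
have notsepC : ~ cl_separator e C.
  by move/clk => kC; move: rankP_lt; rewrite ltnNge (leq_trans kC card_diag0_le_rank).
case: sepP => [notconn | dimT].
  apply: notconn; exists n.+1; split => //; apply: mxpowv_compress_SG_corner => x y xC yC.
  by apply/negPn/negP => nxy; apply: notsepC; left; exists x, y.
have n_gt0 : (0 < n)%N.
  by have := dimvS (subvf T); rewrite dimvf dimT /dim /= muln_gt0 andbb.
have := cl_kconnected_le_pred clk n_gt0.
have := compress_SG_dim1_rank dimT.
have : (n <= \rank P + \rank Q)%N.
  by rewrite -[X in (X <= _)%N](mxrank1 algC) -[1%:M](subrK P) addrC mxrank_add.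
lia.
Qed.

End SeparatorToVertexCut.

Lemma cl_to_q_kconnected n (e : rel 'I_n) k :
  cl_kconnected e k -> q_kconnected (SG e) k.
Proof. by move=> clk P sepP; apply: (cl_kconnected_rank_proj sepP.1 clk sepP). Qed.

Theorem proposition4p4 (n : nat) (e : rel 'I_n) (k : nat) :
  simple_graph e ->
  cl_kconnected e k <-> q_kconnected (SG e) k.
Proof.
move=> _; split; [exact: cl_to_q_kconnected | exact: q_to_cl_kconnected].
Qed.
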